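(* Let $\mathbb{D}^n$ be the unit polydisk in $\mathbb{C}^n$, let $\mu:\mathbb{D}^n\to(0,\infty)$ be a weight, let $\psi\in H(\mathbb{D}^n)$ and let $\varphi=(\varphi_1,\dots,\varphi_n)$ be a holomorphic self-map of $\mathbb{D}^n$. Let $W_{\psi,\varphi}f=\psi\,(f\circ\varphi)$. The following are equivalent: (a) $W_{\psi,\varphi}:\mathcal{B}(\mathbb{D}^n)\to H^\infty_\mu(\mathbb{D}^n)$ is bounded; (b) $W_{\psi,\varphi}:\mathcal{B}_{0*}(\mathbb{D}^n)\to H^\infty_\mu(\mathbb{D}^n)$ is bounded; (c) $\psi\in H^\infty_\mu(\mathbb{D}^n)$ and $$\vartheta_\mu(\psi,\varphi)=\sup_{z\in\mathbb{D}^n}\tfrac12\mu(z)|\psi(z)|\sum_{j=1}^n\log\frac{1+|\varphi_j(z)|}{1-|\varphi_j(z)|}$$ is finite.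
   Context: $H(\mathbb{D}^n)$ denotes holomorphic functions $\mathbb{D}^n\to\mathbb{C}$. A weight is a continuous strictly positive function $\mu$; $H^\infty_\mu(\mathbb{D}^n)=\{f\in H(\mathbb{D}^n):\|f\|_{H^\infty_\mu}=\sup_{z}\mu(z)|f(z)|<\infty\}$. The Bergman metric of $\mathbb{D}^n$ is $H_z(u,\bar v)=\sum_{j=1}^n\frac{u_j\bar v_j}{(1-|z_j|^2)^2}$. For $f\in H(\mathbb{D}^n)$, $Q_f(z)=\sup_{u\ne 0}\frac{|\sum_k \partial_k f(z)u_k|}{H_z(u,\bar u)^{1/2}}$, $\beta_f=\sup_z Q_f(z)$, $\mathcal{B}(\mathbb{D}^n)=\{f:\beta_f<\infty\}$ with norm $\|f\|_{\mathcal{B}}=|f(0)|+\beta_f$, and $\mathcal{B}_{0*}(\mathbb{D}^n)=\{f\in\mathcal{B}(\mathbb{D}^n):\lim_{z\to\partial^*\mathbb{D}^n}Q_f(z)=0\}$ with the same norm, where $\partial^*\mathbb{D}^n$ is the distinguished boundary (the torus $\{|z_1|=\dots=|z_n|=1\}$). *)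

From HB Require Import structures.
From mathcomp Require Import all_boot all_order all_algebra.
From mathcomp Require Import all_classical all_reals all_analysis.
From mathcomp Require Import complex.
Import Order.TTheory GRing.Theory Num.Theory.
Import numFieldNormedType.Exports.

Set Implicit Arguments.
Unset Strict Implicit.
Unset Printing Implicit Defensive.

Local Open Scope ring_scope.
Local Open Scope classical_set_scope.

(* The complex field, seen as a numClosedFieldType so that MathComp-Analysis'
   normed-module structure (over C itself) is found; 'differentiable' over
   this field is complex (Frechet) differentiability. *)
Definition CC (R : rcfType) : numClosedFieldType := R[i].

Section Defs.
Variables (R : realType) (n : nat).

Local Notation C := (CC R).
Local Notation Cn := 'rV[C]_n.

Definition cabs (x : C) : R := Normc.normc (x : R[i]).

Definition polydisk : set Cn := [set z | forall j : 'I_n, cabs (z 0 j) < 1].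

Definition holo (f : Cn -> C) : Prop :=
  forall z, polydisk z -> differentiable f z.

Definition holo_selfmap (phi : Cn -> Cn) : Prop :=
  (forall j : 'I_n, holo (fun z => phi z 0 j)) /\
  (forall z, polydisk z -> polydisk (phi z)).

Definition is_weight (mu : Cn -> R) : Prop :=
  {within polydisk, continuous mu} /\ (forall z, polydisk z -> 0 < mu z).

Definition partial (f : Cn -> C) (k : 'I_n) (z : Cn) : C := 'D_('e_k) f z.

Definition bergmanH (z u : Cn) : R :=
  \sum_(j < n) cabs (u 0 j) ^+ 2 / (1 - cabs (z 0 j) ^+ 2) ^+ 2.

Definition Qf (f : Cn -> C) (z : Cn) : R :=
  sup [set cabs (\sum_(k < n) partial f k z * u 0 k) / Num.sqrt (bergmanH z u)
      | u in [set u : Cn | u != 0]].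

Definition beta (f : Cn -> C) : R := sup [set Qf f z | z in polydisk].

Definition in_Bloch (f : Cn -> C) : Prop :=
  holo f /\ has_ubound [set Qf f z | z in polydisk].

Definition bloch_norm (f : Cn -> C) : R := cabs (f 0) + beta f.

(* B_{0*}(D^n): Q_f(z) -> 0 as z -> distinguished boundary (all |z_j| -> 1) *)
Definition in_Bloch0star (f : Cn -> C) : Prop :=
  in_Bloch f /\
  forall eps : R, 0 < eps -> exists delta : R, 0 < delta /\
    forall z, polydisk z -> (forall j : 'I_n, 1 - cabs (z 0 j) < delta) ->
      Qf f z < eps.

Definition in_Hinf (mu : Cn -> R) (g : Cn -> C) : Prop :=
  holo g /\ has_ubound [set mu z * cabs (g z) | z in polydisk].

Definition Hinf_norm (mu : Cn -> R) (g : Cn -> C) : R :=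
  sup [set mu z * cabs (g z) | z in polydisk].

Definition Wop (psi : Cn -> C) (phi : Cn -> Cn) (f : Cn -> C) : Cn -> C :=
  fun z => psi z * f (phi z).

Definition bounded_into_Hinf (X : (Cn -> C) -> Prop) (mu : Cn -> R)
    (T : (Cn -> C) -> (Cn -> C)) : Prop :=
  exists M : R, forall f, X f ->
    in_Hinf mu (T f) /\ Hinf_norm mu (T f) <= M * bloch_norm f.

Definition theta_set (mu : Cn -> R) (psi : Cn -> C) (phi : Cn -> Cn) : set R :=
  [set 2^-1 * mu z * cabs (psi z) *
       \sum_(j < n) ln ((1 + cabs (phi z 0 j)) / (1 - cabs (phi z 0 j)))
  | z in polydisk].

End Defs.

(* (c) => (a): along the ray t |-> t w, the derivative of f is at most Q_f(t w) times the
   Bergman length of w at t w, which is at most \sum_j |w_j| / (1 - t^2 |w_j|^2), the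
   t-derivative of \sum_j artanh (t |w_j|).  Hence
   |f(w) - f(0)| <= beta_f \sum_j artanh |w_j|, and mu |psi (f o phi)| is at most
   mu |psi| |f(0)| + beta_f theta.
   (b) => (c): f = 1 shows psi in H^oo_mu.  For w in the polydisk, the polynomial
   F_w(z) = \sum_j \sum_(k < N_j) (conj(w_j) z_j)^(k+1) / (k+1) with
   N_j ~ 1 / (2 (1 - |w_j|^2)) lies in B_0* with Bloch norm at most 2n, because
   (1 - |z_j|^2) |d_j F_w(z)| <= 2, and Re F_w(w) >= \sum_j artanh |w_j| - 2n.
   Applying the bounded operator to F_(phi z) and evaluating at z bounds theta. *)

From mathcomp Require Import all_boot all_order all_algebra.
From mathcomp Require Import all_classical all_reals all_analysis.
From mathcomp Require Import complex ring lra.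
Import Order.TTheory GRing.Theory Num.Theory.
Import numFieldNormedType.Exports.

Set Implicit Arguments.
Unset Strict Implicit.

Local Open Scope ring_scope.
Local Open Scope classical_set_scope.
Local Open Scope complex_scope.

Section ComplexModulus.
Variable R : realType.
Local Notation C := (CC R).

Lemma cabsE (x : C) : `|x| = (cabs x)%:C.
Proof. by []. Qed.

Lemma cabs_ge0 (x : C) : 0 <= cabs x.
Proof. by rewrite -lecR -cabsE normr_ge0. Qed.

Lemma cabs_eq0 (x : C) : (cabs x == 0) = (x == 0).
Proof. by rewrite -(inj_eq (@complexI R)) -cabsE normr_eq0. Qed.

Lemma cabs_real (a : R) : cabs a%:C = `|a|.
Proof. by rewrite /cabs /= expr0n /= addr0 sqrtr_sqr. Qed.

Lemma cabs0 : cabs (0 : C) = 0.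
Proof. exact: Normc.normc0. Qed.

Lemma cabsM (x y : C) : cabs (x * y) = cabs x * cabs y.
Proof. exact: Normc.normcM. Qed.

Lemma cabsV (x : C) : cabs x^-1 = (cabs x)^-1.
Proof. exact: Normc.normcV. Qed.

Lemma cabsX (x : C) k : cabs (x ^+ k) = cabs x ^+ k.
Proof. by apply: complexI; rewrite -cabsE normrX cabsE rmorphXn. Qed.

Lemma cabsN (x : C) : cabs (- x) = cabs x.
Proof. by apply: complexI; rewrite -!cabsE normrN. Qed.

Lemma cabs_conj (x : C) : cabs x^* = cabs x.
Proof. by case: x => a b; rewrite /cabs /= sqrrN. Qed.

Lemma ler_cabsD (x y : C) : cabs (x + y) <= cabs x + cabs y.
Proof. by rewrite -lecR rmorphD -!cabsE ler_normD. Qed.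

Lemma ler_cabs_sum (I : finType) (F : I -> C) :
  cabs (\sum_i F i) <= \sum_i cabs (F i).
Proof. by rewrite -lecR rmorph_sum -cabsE; exact: ler_norm_sum. Qed.

Lemma mul_conj_cabs (x : C) : x * x^* = (cabs x ^+ 2)%:C.
Proof. by rewrite -normCK cabsE rmorphXn. Qed.

Lemma ler_Re_cabs (x : C) : complex.Re x <= cabs x.
Proof.
case: x => a b; rewrite /cabs /=; apply: le_trans (ler_norm a) _.
by rewrite -sqrtr_sqr ler_sqrt ?addr_ge0 ?sqr_ge0 // lerDl sqr_ge0.
Qed.

Lemma ler_abs_Re_cabs (x : C) : `|complex.Re x| <= cabs x.
Proof.
have := ler_Re_cabs (- x); rewrite cabsN raddfN /=.
by rewrite ler_norml lerNl => ->; rewrite ler_Re_cabs.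
Qed.

End ComplexModulus.

Section RealInequalities.
Variable R : realType.

Lemma bernoulli_le (s : R) N : 0 <= s -> 1 - N%:R * (1 - s) <= s ^+ N.
Proof.
move=> s0; elim: N => [|N IH]; first by rewrite mul0r subr0 expr0.
rewrite exprS -natr1; have := ler_wpM2l s0 IH.
have : 0 <= N%:R * (1 - s) ^+ 2 by rewrite mulr_ge0 ?sqr_ge0.
set t : R := N%:R; set u := s ^+ N; nra.
Qed.

Lemma ln_le_harmonic N : ln (N.+1%:R : R) <= \sum_(k < N) (k.+1%:R)^-1.
Proof.
elim: N => [|N IH]; first by rewrite big_ord0 ln1.
rewrite big_ord_recr /=.
have -> : (N.+2%:R : R) = N.+1%:R * (1 + (N.+1%:R)^-1).
  by rewrite mulrDr mulr1 mulfV ?pnatr_eq0 // -natr1.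
rewrite lnM ?posrE ?ltr0n ?addr_gt0 ?invr_gt0 ?ltr0n //.
by apply: lerD => //; apply: le_ln1Dx; apply: lt_le_trans (ltrN10 R) _.
Qed.

Lemma ler_geometric_sum (x : R) N : 0 <= x < 1 ->
  \sum_(k < N) x ^+ k <= (1 - x)^-1.
Proof.
move=> /andP[x0 x1]; have h1 : 0 < 1 - x by rewrite subr_gt0.
have e : (\sum_(k < N) x ^+ k) * (1 - x) = 1 - x ^+ N.
  by rewrite mulrC -opprB mulNr -subrX1 opprB.
by rewrite -(ler_pM2r h1) e mulVf ?lt0r_neq0 // gerBl exprn_ge0.
Qed.

Lemma sqrt_sum_sqr_le (I : finType) (a : I -> R) : (forall i, 0 <= a i) ->
  Num.sqrt (\sum_i a i ^+ 2) <= \sum_i a i.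
Proof.
move=> a0; have [s0 sle] : 0 <= \sum_i a i /\ \sum_i a i ^+ 2 <= (\sum_i a i) ^+ 2.
  apply: (big_ind2 (fun x y => 0 <= y /\ x <= y ^+ 2)) => // x1 x2 y1 y2 [? ?] [? ?].
  by split; [exact: addr_ge0 | nra].
by rewrite -[leRHS]ger0_norm // -sqrtr_sqr ler_sqrt // sqr_ge0.
Qed.

End RealInequalities.

Section Artanh.
Variable R : realType.

Definition artanh (x : R) : R := 2^-1 * (ln (1 + x) - ln (1 - x)).

Lemma artanhE (x : R) : -1 < x < 1 -> artanh x = 2^-1 * ln ((1 + x) / (1 - x)).
Proof. by move=> /andP[? ?]; rewrite /artanh ln_div // posrE; lra. Qed.

Lemma artanh0 : artanh 0 = 0.
Proof. by rewrite /artanh addr0 subr0 subrr mulr0. Qed.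

Lemma is_derive_ln1Dmul (c t : R) : 0 < 1 + c * t ->
  is_derive t 1 (fun x => ln (1 + c * x)) (c / (1 + c * t)).
Proof.
move=> ct; have lin : is_derive t 1 (fun x : R => 1 + c * x) c.
  have := is_deriveD (is_derive_cst (1 : R) t 1) (is_deriveZ c (is_derive_id t (1 : R))).
  by move/is_derive_eq; apply; rewrite add0r /GRing.scale /= mulr1.
have := @is_derive1_comp _ (@ln R) (fun x => 1 + c * x) _ _ _ (is_derive1_ln ct) lin.
by rewrite mulrC.
Qed.

Lemma is_derive_artanh_mul (r t : R) : -1 < r * t < 1 ->
  is_derive t 1 (fun s => artanh (r * s)) (r / (1 - (r * t) ^+ 2)).
Proof.
move=> /andP[rt1 rt2].
have -> : (fun s => artanh (r * s)) =
    (fun s => 2^-1 * (ln (1 + r * s) - ln (1 + (- r) * s))).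
  by apply/funext => s; rewrite mulNr.
have p1 : 0 < 1 + r * t by lra.
have p2 : 0 < 1 + - r * t by rewrite mulNr; lra.
have := is_deriveZ 2^-1 (is_deriveB (is_derive_ln1Dmul p1) (is_derive_ln1Dmul p2)).
move/is_derive_eq; apply.
have p3 : 0 < 1 - (r * t) ^+ 2 by nra.
by rewrite /GRing.scale /=; field; rewrite !lt0r_neq0.
Qed.

(* The cutoff keeps s ^+ N >= 1/2 (Bernoulli) while ln N is still -ln (1 - s) up to a
   constant. *)
Definition log_cutoff (s : R) : nat := Num.Def.truncn ((2 * (1 - s))^-1).

Lemma half_le_expn_log_cutoff (s : R) : 0 <= s < 1 -> 2^-1 <= s ^+ log_cutoff s.
Proof.
move=> /andP[s0 s1]; set x := (2 * (1 - s))^-1.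
have x0 : 0 <= x by rewrite invr_ge0; lra.
have [Nx _] := andP (truncn_itv x0).
have hx : x * (1 - s) = 2^-1.
  by rewrite /x invfM -mulrA mulVf ?mulr1 // lt0r_neq0 // subr_gt0.
apply: le_trans (bernoulli_le _ s0); rewrite -/x.
have : (Num.Def.truncn x)%:R * (1 - s) <= x * (1 - s) by rewrite ler_wpM2r //; lra.
lra.
Qed.

Lemma ln_le_log_series (s : R) : 0 <= s < 1 ->
  2^-1 * ln ((2 * (1 - s))^-1) <= \sum_(k < log_cutoff s) s ^+ k.+1 / k.+1%:R.
Proof.
move=> hs; have /andP[s0 s1] := hs; set N := log_cutoff s.
have x0 : 0 < (2 * (1 - s))^-1 by rewrite invr_gt0; lra.
have [_ xN] := andP (truncn_itv (ltW x0)).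
have H0 : 0 <= \sum_(k < N) (k.+1%:R : R)^-1.
  by apply: sumr_ge0 => k _; rewrite invr_ge0.
apply: le_trans (_ : s ^+ N * \sum_(k < N) (k.+1%:R)^-1 <= _).
  apply: le_trans _ (ler_wpM2r H0 (half_le_expn_log_cutoff hs)).
  apply: ler_wpM2l; first lra.
  apply: le_trans _ (ln_le_harmonic R N).
  by rewrite ler_ln ?posrE ?ltr0n //; exact: ltW xN.
rewrite mulr_sumr; apply: ler_sum => k _; apply: ler_wpM2r; first by rewrite invr_ge0.
by apply: ler_wiXn2l => //; exact: ltW.
Qed.

Lemma artanh_le_log_series (r : R) : 0 <= r < 1 ->
  artanh r <= 2 + \sum_(k < log_cutoff (r ^+ 2)) (r ^+ 2) ^+ k.+1 / k.+1%:R.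
Proof.
move=> /andP[r0 r1]; have hs : 0 <= r ^+ 2 < 1 by rewrite sqr_ge0 /=; nra.
have p1 : 0 < 1 - r by lra.
have p2 : 0 < 1 + r by lra.
have hx : ln ((2 * (1 - r ^+ 2))^-1) = - (ln 2 + (ln (1 - r) + ln (1 + r))).
  have -> : 1 - r ^+ 2 = (1 - r) * (1 + r) by ring.
  by rewrite lnV ?posrE ?mulr_gt0 // !lnM ?posrE ?mulr_gt0.
have ln2 : ln (2 : R) <= 1.
  by have := @le_ln1Dx R 1; rewrite -[1 + 1]/(2 : R); apply; lra.
have := ln_le_log_series hs; have := @le_ln1Dx R r.
rewrite hx /artanh; lra.
Qed.

Lemma is_derive_sum_artanh (m : nat) (r : 'I_m -> R) (t : R) :
  (forall i, 0 <= r i < 1) -> 0 <= t <= 1 ->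
  is_derive t 1 (fun s => \sum_i artanh (r i * s)) (\sum_i r i / (1 - (r i * t) ^+ 2)).
Proof.
move=> r01 /andP[t0 t1].
have -> : (fun s => \sum_i artanh (r i * s)) = \sum_i (fun s => artanh (r i * s)).
  by apply/funext => s; rewrite fct_sumE.
apply: is_derive_sum => i; apply: is_derive_artanh_mul.
have /andP[r0 r1] := r01 i; apply/andP; split; nra.
Qed.

End Artanh.

Section BergmanMetric.
Variables (R : realType) (n : nat).
Local Notation C := (CC R).
Local Notation Cn := 'rV[C]_n.

Lemma polydisk0 : polydisk (0 : Cn).
Proof. by move=> j; rewrite mxE cabs0 ltr01. Qed.

Lemma polydisk_gap_gt0 (z : Cn) k : polydisk z -> 0 < 1 - cabs (z 0 k) ^+ 2.
Proof.
move=> pz; have := pz k; have := cabs_ge0 (z 0 k).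
by rewrite subr_gt0 -(expr1n _ 2) => ? ?; rewrite ltr_pXn2r ?nnegrE.
Qed.

Lemma bergmanH_gt0 (z u : Cn) : polydisk z -> u != 0 -> 0 < bergmanH z u.
Proof.
move=> pz; apply: contraNT; rewrite -leNgt => H0; apply/eqP/rowP => k.
have term_ge0 j : 0 <= cabs (u 0 j) ^+ 2 / (1 - cabs (z 0 j) ^+ 2) ^+ 2.
  by rewrite divr_ge0 ?sqr_ge0.
have /eqP : cabs (u 0 k) ^+ 2 / (1 - cabs (z 0 k) ^+ 2) ^+ 2 = 0.
  apply/eqP; rewrite eq_le term_ge0 andbT; apply: le_trans H0.
  by rewrite /bergmanH (bigD1 k) //= lerDl sumr_ge0.
rewrite mulf_eq0 invr_eq0 !expf_eq0 /= (gt_eqF (polydisk_gap_gt0 k pz)) orbF.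
by rewrite cabs_eq0 mxE => /eqP.
Qed.

Lemma cabs_coord_le_bergmanH (z u : Cn) k : polydisk z ->
  cabs (u 0 k) <= (1 - cabs (z 0 k) ^+ 2) * Num.sqrt (bergmanH z u).
Proof.
move=> pz; have dk := polydisk_gap_gt0 k pz; set d := 1 - _ in dk *.
have hk : cabs (u 0 k) ^+ 2 <= d ^+ 2 * bergmanH z u.
  rewrite -ler_pdivrMl ?exprn_gt0 // mulrC /bergmanH (bigD1 k) //= lerDl.
  by apply: sumr_ge0 => j _; rewrite divr_ge0 ?sqr_ge0.
have H0 : 0 <= d ^+ 2 * bergmanH z u := le_trans (sqr_ge0 _) hk.
rewrite -(ger0_norm (cabs_ge0 _)) -sqrtr_sqr -(ger0_norm (ltW dk)) -sqrtr_sqr.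
by rewrite -sqrtrM ?sqr_ge0 // ler_sqrt.
Qed.

Definition bloch_majorant (f : Cn -> C) (z : Cn) : R :=
  \sum_(k < n) cabs (partial f k z) * (1 - cabs (z 0 k) ^+ 2).

Lemma bloch_majorant_ge0 (f : Cn -> C) (z : Cn) :
  polydisk z -> 0 <= bloch_majorant f z.
Proof.
move=> pz; apply: sumr_ge0 => k _.
by rewrite mulr_ge0 ?cabs_ge0 // ltW ?polydisk_gap_gt0.
Qed.

Lemma cabs_gradient_le (f : Cn -> C) (z u : Cn) : polydisk z ->
  cabs (\sum_(k < n) partial f k z * u 0 k) <=
  bloch_majorant f z * Num.sqrt (bergmanH z u).
Proof.
move=> pz; apply: le_trans (ler_cabs_sum _) _.
rewrite mulr_suml; apply: ler_sum => k _; rewrite cabsM -mulrA.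
by rewrite ler_wpM2l ?cabs_ge0 ?cabs_coord_le_bergmanH.
Qed.

Definition bergman_ratio (f : Cn -> C) (z u : Cn) : R :=
  cabs (\sum_(k < n) partial f k z * u 0 k) / Num.sqrt (bergmanH z u).

Lemma QfE (f : Cn -> C) (z : Cn) :
  Qf f z = sup (bergman_ratio f z @` [set u | u != 0]).
Proof. by []. Qed.

Lemma bergman_ratio_ubound (f : Cn -> C) (z : Cn) : polydisk z ->
  ubound (bergman_ratio f z @` [set u | u != 0]) (bloch_majorant f z).
Proof.
move=> pz _ [u /= u0 <-]; rewrite ler_pdivrMr ?sqrtr_gt0 ?bergmanH_gt0 //.
exact: cabs_gradient_le.
Qed.

Lemma bergman_ratio_has_ubound (f : Cn -> C) (z : Cn) : polydisk z ->
  has_ubound (bergman_ratio f z @` [set u | u != 0]).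
Proof. by move=> pz; exists (bloch_majorant f z); exact: bergman_ratio_ubound. Qed.

(* For n = 0 there is no nonzero direction u, and then Qf f z = sup set0 = 0. *)
Lemma Qf_le_majorant (f : Cn -> C) (z : Cn) : polydisk z -> Qf f z <= bloch_majorant f z.
Proof.
move=> pz; rewrite QfE.
have [[r hr]|] := pselect (bergman_ratio f z @` [set u | u != 0] !=set0).
  by apply: ge_sup; [exists r | exact: bergman_ratio_ubound].
by move/set0P/negP/negbNE/eqP => ->; rewrite sup0 bloch_majorant_ge0.
Qed.

Lemma Qf_ge0 (f : Cn -> C) (z : Cn) : polydisk z -> 0 <= Qf f z.
Proof.
move=> pz; rewrite QfE.
have [[r hr]|] := pselect (bergman_ratio f z @` [set u | u != 0] !=set0).
  apply: le_trans (ub_le_sup (bergman_ratio_has_ubound f pz) hr).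
  by case: hr => u _ <-; rewrite divr_ge0 ?cabs_ge0 ?sqrtr_ge0.
by move/set0P/negP/negbNE/eqP => ->; rewrite sup0.
Qed.

Lemma cabs_gradient_le_Qf (f : Cn -> C) (z u : Cn) : polydisk z ->
  cabs (\sum_(k < n) partial f k z * u 0 k) <= Qf f z * Num.sqrt (bergmanH z u).
Proof.
move=> pz; have [->|u0] := eqVneq u 0.
  rewrite big1 ?cabs0 ?mulr_ge0 ?Qf_ge0 ?sqrtr_ge0 // => k _.
  by rewrite mxE mulr0.
rewrite -ler_pdivrMr ?sqrtr_gt0 ?bergmanH_gt0 // QfE.
by apply: ub_le_sup; [exact: bergman_ratio_has_ubound | exists u].
Qed.

End BergmanMetric.

Arguments polydisk0 {R n}.

Section RealRays.
Variable R : realType.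
Local Notation C := (CC R).

Lemma Re_continuous : continuous (fun z : C => complex.Re z).
Proof.
move=> z0; apply/(@cvgrPdist_lt _ _ _ _ (nbhs_filter z0)) => e e0.
have eC : (0 : C) < e%:C by rewrite ltcR.
near=> z; rewrite -raddfB /=; apply: le_lt_trans (ler_abs_Re_cabs _) _.
rewrite -ltcR -cabsE; near: z; move: eC.
by apply: (@cvgrPdist_lt _ _ _ _ (nbhs_filter z0) id z0).1; exact: cvg_id.
Unshelve. all: by end_near.
Qed.

Lemma realC_continuous : continuous (fun s : R => s%:C : C).
Proof.
move=> s0; apply/(@cvgrPdist_lt _ _ _ _ (nbhs_filter s0)) => e.
rewrite ltcE => /andP[/eqP Ime Ree]; have -> : e = (complex.Re e)%:C.
  by move: Ime; case: e {Ree} => a b /= ->.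
near=> s; rewrite -rmorphB cabsE cabs_real ltcR; near: s; move: Ree.
by apply: (@cvgrPdist_lt _ _ _ _ (nbhs_filter s0) id s0).1; exact: cvg_id.
Unshelve. all: by end_near.
Qed.

Lemma realC_cvg_dnbhs0 : (fun s : R => s%:C : C) @ 0^' --> (0 : C)^'.
Proof.
move=> A A0; have {}A0 := @realC_continuous 0 _ A0.
change (nbhs (0 : R) (fun s : R => s != 0 -> A s%:C)).
apply: (@filterS _ _ (nbhs_filter (0 : R)) _ _ _ A0) => s As s0; apply: As.
by rewrite eq_complex /= negb_and s0.
Qed.

Lemma ReB (x y : C) : complex.Re (x - y) = complex.Re x - complex.Re y.
Proof. by case: x y => [a b] [c d]. Qed.

Lemma Re_realCM (r : R) (x : C) : complex.Re (r%:C * x) = r * complex.Re x.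
Proof. by case: x => a b /=; ring. Qed.

(* C is normed only over itself, so the real derivative along the ray is read off the
   complex difference quotient restricted to real increments. *)
Lemma is_derive_Re_ray (V : normedModType C) (F : V -> C) (w : V) (om : C) (t : R) :
  differentiable F (t%:C *: w) ->
  is_derive t 1 (fun s : R => complex.Re (om * F (s%:C *: w)))
    (complex.Re (om * 'D_w F (t%:C *: w))).
Proof.
move=> dF; set a := t%:C *: w; set h := fun s : R => _.
have dq : (fun k : C => k^-1 *: ((F \o shift a) (k *: w) - F a)) @ 0^' --> 'D_w F a.
  exact: diff_derivable dF.
have ReM : continuous (fun x : C => complex.Re (om * x)).
  by move=> x; apply: continuous_comp; [exact: mulrl_continuous | exact: Re_continuous].
have key : (fun s : R => s^-1 *: ((h \o shift t) (s *: 1) - h t)) =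
    (fun x => complex.Re (om * x)) \o
    (fun k : C => k^-1 *: ((F \o shift a) (k *: w) - F a)) \o (fun s : R => s%:C).
  apply/funext => s; rewrite /h /a /= -[s *: 1]/(s * 1) mulr1 rmorphD scalerDl.
  rewrite -fmorphV -[_ *: (_ - _)]/(_ * _) mulrCA Re_realCM.
  by congr (_ * _); rewrite -ReB mulrBr.
have cv : (fun s : R => s^-1 *: ((h \o shift t) (s *: 1) - h t)) @ 0^' -->
    complex.Re (om * 'D_w F a).
  by rewrite key; exact: cvg_comp _ _ realC_cvg_dnbhs0 (cvg_comp _ _ dq (ReM _)).
by apply: DeriveDef; [exact: cvgP cv | exact: cvg_lim cv].
Qed.

Lemma ler0_is_derive_le (k dk : R -> R) (a b : R) : a <= b ->
  (forall t, a <= t <= b -> is_derive t 1 k (dk t)) ->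
  (forall t, a <= t <= b -> dk t <= 0) -> k b <= k a.
Proof.
move=> ab derk dk_le0.
have oc t : t \in `]a, b[%R -> a <= t <= b by rewrite in_itv /= => /andP[? ?]; rewrite !ltW.
have k_cont : {within `[a, b], continuous k}.
  apply: derivable_within_continuous => t; rewrite in_itv /= => tab.
  exact: (@ex_derive _ _ _ _ _ _ _ (derk t tab)).
have dk_ex t : t \in `]a, b[%R -> derivable k t 1.
  by move=> /oc tab; exact: (@ex_derive _ _ _ _ _ _ _ (derk t tab)).
have dk1_le0 t : t \in `]a, b[%R -> k^`() t <= 0.
  by move=> /oc tab; rewrite derive1E (@derive_val _ _ _ _ _ _ _ (derk t tab)) dk_le0.
by apply: (ler0_derive1_le_cc dk_ex dk1_le0 k_cont); rewrite ?in_itv /= ?lexx ?ab.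
Qed.

End RealRays.

Section BlochGrowth.
Variables (R : realType) (n : nat).
Local Notation C := (CC R).
Local Notation Cn := 'rV[C]_n.

Lemma derive_row_sum (f : Cn -> C) (z u : Cn) : differentiable f z ->
  'D_u f z = \sum_(k < n) partial f k z * u 0 k.
Proof.
move=> df; rewrite deriveE // {1}(row_sum_delta u) linear_sum.
by apply: eq_bigr => k _; rewrite linearZ /= /partial deriveE // mulrC.
Qed.

Lemma Qf_le_beta (f : Cn -> C) (z : Cn) : in_Bloch f -> polydisk z -> Qf f z <= beta f.
Proof. by move=> [_ ub] pz; apply: ub_le_sup => //; exists z. Qed.

Lemma beta_ge0 (f : Cn -> C) : in_Bloch f -> 0 <= beta f.
Proof.
move=> Bf; exact: le_trans (Qf_ge0 f polydisk0) (Qf_le_beta Bf polydisk0).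
Qed.

Lemma cabs_derive_le_beta (f : Cn -> C) (z u : Cn) : in_Bloch f -> polydisk z ->
  cabs ('D_u f z) <= beta f * Num.sqrt (bergmanH z u).
Proof.
move=> Bf pz; rewrite derive_row_sum; last exact: Bf.1.
apply: le_trans (cabs_gradient_le_Qf f u pz) _.
by rewrite ler_wpM2r ?sqrtr_ge0 ?Qf_le_beta.
Qed.

Lemma polydisk_scale (w : Cn) (t : R) : polydisk w -> 0 <= t <= 1 -> polydisk (t%:C *: w).
Proof.
move=> pw /andP[t0 t1] j; rewrite mxE cabsM cabs_real ger0_norm //.
by apply: le_lt_trans (pw j); rewrite ler_piMl ?cabs_ge0.
Qed.

Lemma sqrt_bergmanH_ray_le (w : Cn) (t : R) : polydisk w -> 0 <= t <= 1 ->
  Num.sqrt (bergmanH (t%:C *: w) w) <=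
  \sum_(j < n) cabs (w 0 j) / (1 - (cabs (w 0 j) * t) ^+ 2).
Proof.
move=> pw /andP[t0 t1].
have -> : bergmanH (t%:C *: w) w =
    \sum_(j < n) (cabs (w 0 j) / (1 - (cabs (w 0 j) * t) ^+ 2)) ^+ 2.
  by apply: eq_bigr => j _; rewrite mxE cabsM cabs_real ger0_norm // expr_div_n (mulrC t).
apply: (sqrt_sum_sqr_le (a := fun j => cabs (w 0 j) / (1 - (cabs (w 0 j) * t) ^+ 2))).
move=> j; have r0 := cabs_ge0 (w 0 j); have r1 := pw j.
have /andP[rt0 rt1] : 0 <= cabs (w 0 j) * t <= 1 by rewrite mulr_ge0 //= mulr_ile1 // ltW.
by rewrite divr_ge0 // subr_ge0 exprn_ile1.
Qed.

Lemma exists_phase (d : C) :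
  exists om : C, complex.Re (om * d) = cabs d /\ forall x, complex.Re (om * x) <= cabs x.
Proof.
have [->|d0] := eqVneq d 0.
  by exists 0; rewrite cabs0; split => [|x]; rewrite mul0r ?cabs_ge0.
have cd0 : cabs d != 0 by rewrite cabs_eq0.
exists (d^* / (cabs d)%:C); split => [|x].
  by rewrite mulrAC [d^* * d]mulrC mul_conj_cabs -fmorphV -rmorphM /= expr2 mulfK.
apply: le_trans (ler_Re_cabs _) _.
by rewrite !cabsM cabsV cabs_conj cabs_real ger0_norm ?cabs_ge0 // mulfV // mul1r.
Qed.

Lemma bloch_growth (f : Cn -> C) (w : Cn) : in_Bloch f -> polydisk w ->
  cabs (f w - f 0) <= beta f * \sum_(j < n) artanh (cabs (w 0 j)).
Proof.
move=> Bf pw; have [om [omd omle]] := exists_phase (f w - f 0).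
set r := fun j => cabs (w 0 j).
have r01 j : 0 <= r j < 1 by rewrite /r cabs_ge0 pw.
pose k t := complex.Re (om * f (t%:C *: w)) - beta f * \sum_j artanh (r j * t).
pose dk t := complex.Re (om * 'D_w f (t%:C *: w)) -
  beta f * \sum_j r j / (1 - (r j * t) ^+ 2).
have derk (t : R) : 0 <= t <= 1 -> is_derive t 1 k (dk t).
  move=> t01; apply: is_deriveB.
    by apply: is_derive_Re_ray; apply: Bf.1; exact: polydisk_scale.
  have -> : (fun s => beta f * \sum_j artanh (r j * s)) =
      beta f *: (fun s => \sum_j artanh (r j * s)) by [].
  exact: is_deriveZ (is_derive_sum_artanh r01 t01).
have dk_le0 (t : R) : 0 <= t <= 1 -> dk t <= 0.
  move=> t01; rewrite subr_le0; apply: le_trans (omle _) _.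
  apply: le_trans (cabs_derive_le_beta w Bf (polydisk_scale pw t01)) _.
  by rewrite ler_wpM2l ?beta_ge0 // sqrt_bergmanH_ray_le.
have := ler0_is_derive_le ler01 derk dk_le0; rewrite /k.
have -> : \sum_j artanh (r j * 0) = 0 by rewrite big1 // => j _; rewrite mulr0 artanh0.
have -> : \sum_j artanh (r j * 1) = \sum_j artanh (cabs (w 0 j)).
  by apply: eq_bigr => j _; rewrite mulr1.
rewrite (_ : 1%:C = 1 :> C) // (_ : 0%:C = 0 :> C) // scale1r scale0r.
by rewrite -omd mulrBr ReB mulr0 subr0; lra.
Qed.

End BlochGrowth.

Section LogPolynomials.
Variable R : realType.
Local Notation C := (CC R).

Definition logpoly (c : C) (N : nat) (x : C) : C :=
  \sum_(k < N) (c * x) ^+ k.+1 / k.+1%:R.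

Definition dlogpoly (c : C) (N : nat) (x : C) : C := \sum_(k < N) c * (c * x) ^+ k.

Lemma is_derive_logpoly (c : C) N (x : C) :
  is_derive x 1 (logpoly c N) (dlogpoly c N x).
Proof.
have -> : logpoly c N = \sum_(k < N) (fun y => (k.+1%:R)^-1 * (c * y) ^+ k.+1).
  by apply/funext => y; rewrite fct_sumE; apply: eq_bigr => k _; rewrite mulrC.
apply: is_derive_sum => k.
have lin : is_derive x (1 : C) (fun y => c * y) c.
  apply: (is_derive_eq (is_deriveZ c (is_derive_id x 1))).
  by rewrite /GRing.scale /= mulr1.
have := is_deriveZ (k.+1%:R)^-1 (is_deriveX k.+1 lin); rewrite exprfctE => h.
apply: (is_derive_eq h).
by rewrite /GRing.scale /= mulrA mulrA mulVf ?pnatr_eq0 // mul1r mulrC.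
Qed.

Lemma cabs_dlogpoly_le (c x : C) N : cabs c <= 1 -> cabs x < 1 ->
  cabs (dlogpoly c N x) <= \sum_(k < N) cabs x ^+ k.
Proof.
move=> c1 x1; apply: le_trans (ler_cabs_sum _) _; apply: ler_sum => k _.
have c0 := cabs_ge0 c; have x0 := cabs_ge0 x.
rewrite cabsM cabsX cabsM -[leRHS]mul1r ler_pM ?exprn_ge0 ?mulr_ge0 //.
by rewrite lerXn2r ?nnegrE ?mulr_ge0 // ler_piMl.
Qed.

Lemma dlogpoly_bergman_le (c x : C) N : cabs c <= 1 -> cabs x < 1 ->
  cabs (dlogpoly c N x) * (1 - cabs x ^+ 2) <= 2.
Proof.
move=> c1 x1; have x0 := cabs_ge0 x; have h1 : 0 < 1 - cabs x by rewrite subr_gt0.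
apply: le_trans (_ : (1 - cabs x)^-1 * (1 - cabs x ^+ 2) <= 2).
  have x01 : 0 <= cabs x < 1 by rewrite x0.
  apply: ler_wpM2r; first by rewrite subr_ge0; exact: exprn_ile1 x0 (ltW x1).
  exact: le_trans (cabs_dlogpoly_le N c1 x1) (ler_geometric_sum N x01).
have -> : (1 - cabs x)^-1 * (1 - cabs x ^+ 2) = 1 + cabs x by field; rewrite lt0r_neq0.
lra.
Qed.

Lemma cabs_dlogpoly_le_length (c x : C) N : cabs c <= 1 -> cabs x < 1 ->
  cabs (dlogpoly c N x) <= N%:R.
Proof.
move=> c1 x1; apply: le_trans (cabs_dlogpoly_le N c1 x1) _.
apply: le_trans (_ : \sum_(k < N) (1 : R) <= _); last by rewrite sumr_const card_ord.
by apply: ler_sum => k _; rewrite exprn_ile1 ?cabs_ge0 // ltW.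
Qed.

Lemma Re_logpoly_conj (x : C) N :
  complex.Re (logpoly x^* N x) = \sum_(k < N) (cabs x ^+ 2) ^+ k.+1 / k.+1%:R.
Proof.
rewrite /logpoly (@raddf_sum _ _ (@complex.Re R)); apply: eq_bigr => k _.
rewrite [x^* * x]mulrC mul_conj_cabs.
rewrite -[RHS]/(complex.Re ((cabs x ^+ 2) ^+ k.+1 / k.+1%:R)%:C).
congr (complex.Re _).
by rewrite [in RHS]rmorphM [in RHS]fmorphV [in RHS]rmorph_nat [in RHS]rmorphXn.
Qed.

End LogPolynomials.

Section LogPolynomialSums.
Variables (R : realType) (n : nat).
Local Notation C := (CC R).
Local Notation Cn := 'rV[C]_n.

Definition logpoly_sum (c : 'I_n -> C) (N : 'I_n -> nat) (z : Cn) : C :=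
  \sum_(j < n) logpoly (c j) (N j) (z 0 j).

Lemma logpoly_sum0 (c : 'I_n -> C) (N : 'I_n -> nat) : logpoly_sum c N 0 = 0.
Proof.
rewrite /logpoly_sum big1 // => j _; rewrite /logpoly big1 // => k _.
by rewrite mxE mulr0 expr0n mul0r.
Qed.

Lemma logpoly_sum_differentiable (c : 'I_n -> C) (N : 'I_n -> nat) (z : Cn) :
  differentiable (logpoly_sum c N) z.
Proof.
have -> : logpoly_sum c N = \sum_(j < n) (logpoly (c j) (N j) \o fun x : Cn => x 0 j).
  by apply/funext => x; rewrite /logpoly_sum fct_sumE.
apply: differentiable_sum => j; apply: differentiable_comp; first exact: differentiable_coord.
by apply/derivable1_diffP; exact: (@ex_derive _ _ _ _ _ _ _ (is_derive_logpoly _ _ _)).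
Qed.

Lemma partial_logpoly_sum (c : 'I_n -> C) (N : 'I_n -> nat) m (z : Cn) :
  partial (logpoly_sum c N) m z = dlogpoly (c m) (N m) (z 0 m).
Proof.
rewrite /partial /derive.
have -> : (fun h : C =>
      h^-1 *: ((logpoly_sum c N \o shift z) (h *: 'e_m) - logpoly_sum c N z)) =
    (fun h : C => h^-1 *: ((logpoly (c m) (N m) \o shift (z 0 m)) (h *: 1)
                          - logpoly (c m) (N m) (z 0 m))).
  apply/funext => h; congr (_ *: _); rewrite /logpoly_sum /=.
  rewrite (bigD1 m) //= [X in _ - X](bigD1 m) //=.
  rewrite (eq_bigr (fun i => logpoly (c i) (N i) (z 0 i))) => [|i im]; last first.
    by rewrite !mxE (negbTE im) andbF mulr0 add0r.
  by rewrite !mxE !eqxx /= mulr1 -[h%:A]/(h * 1) mulr1 opprD addrACA subrr addr0.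
exact: (@derive_val _ _ _ _ _ _ _ (is_derive_logpoly _ _ _)).
Qed.

Lemma bloch_majorant_logpoly_sum_le (c : 'I_n -> C) (N : 'I_n -> nat) (z : Cn) :
  (forall j, cabs (c j) <= 1) -> polydisk z -> bloch_majorant (logpoly_sum c N) z <= 2 * n%:R.
Proof.
move=> c1 pz; apply: le_trans (_ : \sum_(m < n) (2 : R) <= _).
  by apply: ler_sum => m _; rewrite partial_logpoly_sum dlogpoly_bergman_le.
by rewrite sumr_const card_ord mulr_natr.
Qed.

Lemma bloch_majorant_logpoly_sum_boundary (c : 'I_n -> C) (N : 'I_n -> nat) (z : Cn) (d : R) :
  (forall j, cabs (c j) <= 1) -> polydisk z -> (forall j, 1 - cabs (z 0 j) < d) ->
  bloch_majorant (logpoly_sum c N) z <= 2 * d * \sum_(j < n) (N j)%:R.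
Proof.
move=> c1 pz zd; rewrite /bloch_majorant mulr_sumr; apply: ler_sum => m _.
rewrite partial_logpoly_sum mulrC; apply: ler_pM.
- exact/ltW/polydisk_gap_gt0.
- exact: cabs_ge0.
- by have := pz m; have := zd m; have := cabs_ge0 (z 0 m); nra.
- exact: cabs_dlogpoly_le_length.
Qed.

Lemma Qf_logpoly_sum_le (c : 'I_n -> C) (N : 'I_n -> nat) (z : Cn) :
  (forall j, cabs (c j) <= 1) -> polydisk z ->
  Qf (logpoly_sum c N) z <= 2 * n%:R.
Proof.
move=> c1 pz; apply: le_trans (Qf_le_majorant _ pz) _.
exact: bloch_majorant_logpoly_sum_le.
Qed.

Lemma logpoly_sum_Bloch0star (c : 'I_n -> C) (N : 'I_n -> nat) :
  (forall j, cabs (c j) <= 1) -> in_Bloch0star (logpoly_sum c N).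
Proof.
move=> c1; split.
  split=> [z _|]; first exact: logpoly_sum_differentiable.
  by exists (2 * n%:R) => _ [z pz <-]; exact: Qf_logpoly_sum_le.
move=> e e0; pose S := \sum_(j < n) (N j)%:R : R.
have S0 : 0 <= S by apply: sumr_ge0 => j _; exact: ler0n.
exists (e / (2 * S + 1)); split => [|z pz zd]; first by rewrite divr_gt0 //; lra.
apply: le_lt_trans (Qf_le_majorant _ pz) _.
apply: le_lt_trans (bloch_majorant_logpoly_sum_boundary _ c1 pz zd) _; rewrite -/S.
have -> : 2 * (e / (2 * S + 1)) * S = e * (2 * S) / (2 * S + 1) by ring.
by rewrite ltr_pdivrMr; nra.
Qed.

Lemma bloch_norm_logpoly_sum_le (c : 'I_n -> C) (N : 'I_n -> nat) :
  (forall j, cabs (c j) <= 1) -> bloch_norm (logpoly_sum c N) <= 2 * n%:R.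
Proof.
move=> c1; rewrite /bloch_norm logpoly_sum0 cabs0 add0r.
apply: ge_sup; first by exists (Qf (logpoly_sum c N) 0), 0 => //; exact: polydisk0.
by move=> _ [z pz <-]; exact: Qf_logpoly_sum_le.
Qed.

(* A truncation of -\sum_j ln (1 - conj(w_j) z_j): at z = w its real part is a partial
   sum of the series of -\sum_j ln (1 - |w_j|^2). *)
Definition peak_fn (w : Cn) : Cn -> C :=
  logpoly_sum (fun j => (w 0 j)^*) (fun j => log_cutoff (cabs (w 0 j) ^+ 2)).

Lemma peak_fn_coef_le1 (w : Cn) : polydisk w -> forall j, cabs (w 0 j)^* <= 1.
Proof. by move=> pw j; rewrite cabs_conj ltW. Qed.

Lemma sum_artanh_le_peak_fn (w : Cn) : polydisk w ->
  \sum_(j < n) artanh (cabs (w 0 j)) <= 2 * n%:R + cabs (peak_fn w w).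
Proof.
move=> pw; pose S j := \sum_(k < log_cutoff (cabs (w 0 j) ^+ 2))
  (cabs (w 0 j) ^+ 2) ^+ k.+1 / k.+1%:R.
apply: le_trans (_ : \sum_(j < n) (2 + S j) <= _).
  by apply: ler_sum => j _; apply: artanh_le_log_series; rewrite cabs_ge0 pw.
rewrite big_split sumr_const card_ord mulr_natr lerD2l.
apply: le_trans (ler_Re_cabs _); rewrite /peak_fn /logpoly_sum.
rewrite (@raddf_sum _ _ (@complex.Re R)).
by apply: ler_sum => j _ /=; rewrite Re_logpoly_conj.
Qed.

End LogPolynomialSums.

Lemma has_ubound_ge0 (R : realDomainType) (A : set R) :
  has_ubound A -> exists2 M, 0 <= M & ubound A M.
Proof.
move=> [M AM]; exists (Num.max M 0); first by rewrite le_max lexx orbT.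
by move=> x /AM xM; rewrite le_max xM.
Qed.

Section WeightedComposition.
Variables (R : realType) (n : nat).
Local Notation C := (CC R).
Local Notation Cn := 'rV[C]_n.

Lemma selfmap_differentiable (phi : Cn -> Cn) (z : Cn) :
  holo_selfmap phi -> polydisk z -> differentiable phi z.
Proof.
move=> [hphi _] pz.
have -> : phi = \sum_(j < n) (fun w => phi w 0 j *: ('e_j : Cn)).
  by apply/funext => w; rewrite [LHS]row_sum_delta fct_sumE.
by apply: differentiable_sum => j; apply: differentiableZl; exact: hphi.
Qed.

Lemma Wop_holo (psi : Cn -> C) (phi : Cn -> Cn) (f : Cn -> C) :
  holo psi -> holo_selfmap phi -> holo f -> holo (Wop psi phi f).
Proof.
move=> hpsi hphi hf z pz; have -> : Wop psi phi f = psi * (f \o phi) by [].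
apply: differentiableM; first exact: hpsi.
by apply: differentiable_comp; [exact: selfmap_differentiable | exact/hf/hphi.2].
Qed.

Lemma Bloch0star_cst1 : in_Bloch0star (fun _ : Cn => 1 : C).
Proof.
have Q0 (z : Cn) : polydisk z -> Qf (fun _ => 1 : C) z <= 0.
  move=> pz; apply: le_trans (Qf_le_majorant _ pz) _.
  by rewrite /bloch_majorant big1 // => k _; rewrite /partial derive_cst cabs0 mul0r.
split.
  split=> [z _|]; first exact: differentiable_cst.
  by exists 0 => _ [z pz <-]; exact: Q0.
by move=> e e0; exists 1; split => // z pz _; exact: le_lt_trans (Q0 z pz) e0.
Qed.

Lemma bloch_norm_ge0 (f : Cn -> C) : in_Bloch f -> 0 <= bloch_norm f.
Proof. by move=> Bf; rewrite addr_ge0 ?cabs_ge0 ?beta_ge0. Qed.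

Lemma cabs_bloch_le (f : Cn -> C) (w : Cn) : in_Bloch f -> polydisk w ->
  cabs (f w) <= cabs (f 0) + beta f * \sum_(j < n) artanh (cabs (w 0 j)).
Proof.
move=> Bf pw; rewrite -[f w](subrK (f 0)) addrC.
by apply: le_trans (ler_cabsD _ _) _; rewrite lerD2l bloch_growth.
Qed.

Lemma theta_setE (mu : Cn -> R) (psi : Cn -> C) (w z : Cn) : polydisk w ->
  2^-1 * mu z * cabs (psi z) *
    \sum_(j < n) ln ((1 + cabs (w 0 j)) / (1 - cabs (w 0 j))) =
  mu z * cabs (psi z) * \sum_(j < n) artanh (cabs (w 0 j)).
Proof.
move=> pw; have -> : \sum_(j < n) artanh (cabs (w 0 j)) =
    2^-1 * \sum_(j < n) ln ((1 + cabs (w 0 j)) / (1 - cabs (w 0 j))).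
  rewrite mulr_sumr; apply: eq_bigr => j _; rewrite artanhE //.
  by apply/andP; split; [exact: lt_le_trans (ltrN10 R) (cabs_ge0 _) | exact: pw].
by ring.
Qed.

Lemma le_Hinf_norm (mu : Cn -> R) (g : Cn -> C) (z : Cn) :
  in_Hinf mu g -> polydisk z -> mu z * cabs (g z) <= Hinf_norm mu g.
Proof. by move=> [_ ub] pz; apply: ub_le_sup => //; exists z. Qed.

Lemma Hinf_norm_le (mu : Cn -> R) (g : Cn -> C) (M : R) :
  (forall z, polydisk z -> mu z * cabs (g z) <= M) -> Hinf_norm mu g <= M.
Proof.
move=> gM; apply: ge_sup; first by exists (mu 0 * cabs (g 0)), 0 => //; exact: polydisk0.
by move=> _ [z pz <-]; exact: gM.
Qed.

Lemma bounded_into_Hinf_sub (X Y : (Cn -> C) -> Prop) (mu : Cn -> R)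
    (T : (Cn -> C) -> Cn -> C) :
  (forall f, Y f -> X f) -> bounded_into_Hinf X mu T -> bounded_into_Hinf Y mu T.
Proof. by move=> YX [M hM]; exists M => f /YX; exact: hM. Qed.

Lemma Wop_bounded_of_theta (mu : Cn -> R) (psi : Cn -> C) (phi : Cn -> Cn) :
  is_weight mu -> holo psi -> holo_selfmap phi ->
  in_Hinf mu psi -> has_ubound (theta_set mu psi phi) ->
  bounded_into_Hinf (@in_Bloch R n) mu (Wop psi phi).
Proof.
move=> [_ mu0] hpsi hphi [_ /has_ubound_ge0[P P0 hP]] /has_ubound_ge0[T T0 hT].
exists (P + T) => f Bf.
have key z : polydisk z -> mu z * cabs (Wop psi phi f z) <= (P + T) * bloch_norm f.
  move=> pz; have pw := hphi.2 z pz.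
  have A0 : 0 <= mu z * cabs (psi z) by rewrite mulr_ge0 ?cabs_ge0 // ltW ?mu0.
  have hPz : mu z * cabs (psi z) <= P by apply: hP; exists z.
  have hTz : mu z * cabs (psi z) * \sum_(j < n) artanh (cabs (phi z 0 j)) <= T.
    by rewrite -theta_setE //; apply: hT; exists z.
  have b0 := beta_ge0 Bf; have c0 := cabs_ge0 (f 0).
  have := ler_wpM2l A0 (cabs_bloch_le Bf pw).
  have := ler_wpM2r c0 hPz; have := ler_wpM2l b0 hTz.
  have := mulr_ge0 P0 b0; have := mulr_ge0 T0 c0.
  rewrite /Wop cabsM mulrA /bloch_norm; nra.
split; last exact: Hinf_norm_le.
split; first exact: Wop_holo Bf.1.
by exists ((P + T) * bloch_norm f) => _ [z pz <-]; exact: key.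
Qed.

Lemma theta_of_Wop_bounded0 (mu : Cn -> R) (psi : Cn -> C) (phi : Cn -> Cn) :
  is_weight mu -> holo_selfmap phi ->
  bounded_into_Hinf (@in_Bloch0star R n) mu (Wop psi phi) ->
  in_Hinf mu psi /\ has_ubound (theta_set mu psi phi).
Proof.
move=> [_ mu0] hphi [M hM].
have psiH : in_Hinf mu psi.
  have [] := hM _ Bloch0star_cst1.
  by rewrite (_ : Wop psi phi _ = psi) //; apply/funext => z; rewrite /Wop mulr1.
split => //; have [_ /has_ubound_ge0[P P0 hP]] := psiH.
exists (2 * n%:R * P + `|M| * (2 * n%:R)) => _ [z pz <-].
have pw := hphi.2 z pz; set w := phi z in pw *.
have c1 := peak_fn_coef_le1 pw.
have B0 : in_Bloch0star (peak_fn w) := logpoly_sum_Bloch0star _ c1.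
have [WH Wn] := hM _ B0.
have A0 : 0 <= mu z * cabs (psi z) by rewrite mulr_ge0 ?cabs_ge0 // ltW ?mu0.
have hPz : mu z * cabs (psi z) <= P by apply: hP; exists z.
have hW : mu z * cabs (psi z) * cabs (peak_fn w w) <= `|M| * (2 * n%:R).
  rewrite -mulrA -cabsM; apply: le_trans (le_Hinf_norm WH pz) _; apply: le_trans Wn _.
  apply: le_trans (_ : `|M| * bloch_norm (peak_fn w) <= _).
    by apply: ler_wpM2r; [exact: bloch_norm_ge0 B0.1 | exact: ler_norm].
  by apply: ler_wpM2l; [exact: normr_ge0 | exact: bloch_norm_logpoly_sum_le].
rewrite theta_setE //.
have := ler_wpM2l A0 (sum_artanh_le_peak_fn pw).
have n0 : 0 <= 2 * n%:R :> R by rewrite mulr_ge0.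
have := ler_wpM2r n0 hPz; nra.
Qed.

End WeightedComposition.

Theorem theorem5p1 (R : realType) (n : nat) (mu : 'rV[CC R]_n -> R)
    (psi : 'rV[CC R]_n -> CC R) (phi : 'rV[CC R]_n -> 'rV[CC R]_n) :
  is_weight mu -> holo psi -> holo_selfmap phi ->
  (bounded_into_Hinf (@in_Bloch R n) mu (Wop psi phi) <->
   bounded_into_Hinf (@in_Bloch0star R n) mu (Wop psi phi)) /\
  (bounded_into_Hinf (@in_Bloch R n) mu (Wop psi phi) <->
   (in_Hinf mu psi /\ has_ubound (theta_set mu psi phi))).
Proof.
move=> hmu hpsi hphi.
have a_b : bounded_into_Hinf (@in_Bloch R n) mu (Wop psi phi) ->
    bounded_into_Hinf (@in_Bloch0star R n) mu (Wop psi phi).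
  by move=> hB; apply: bounded_into_Hinf_sub hB => f [].
have b_c := theta_of_Wop_bounded0 hmu hphi.
have c_a := fun c => Wop_bounded_of_theta hmu hpsi hphi c.1 c.2.
split; split.
- exact: a_b.
- by move/b_c/c_a.
- by move/a_b/b_c.
- exact: c_a.
Qed.
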